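(* Let $M\subseteq Seq(\mathbb{R})$ be a union of some of the blocks $A,B,C,D,E,F,G$. Then $M$ is a linear subspace of $Seq(\mathbb{R})$ (under pointwise addition and scalar multiplication) if and only if $M\in\{G,\ B\cup G,\ Seq(\mathbb{R})\}$. (Here $G$ is the space of convergent sequences and $B\cup G=\ell^\infty$ is the space of bounded sequences.)
   Context: $Seq(\mathbb{R})$ denotes the set of all real sequences $a=(a_n)_{n\ge1}$. For such $a$, $L_1(a):=\liminf_{n\to\infty}a_n$ and $L_2(a):=\limsup_{n\to\infty}a_n$, with values in $[-\infty,+\infty]$. The blocks are: $A=\{a: L_1(a)=-\infty,\ -\infty<L_2(a)<+\infty\}$; $B=\{a: -\infty<L_1(a)<L_2(a)<+\infty\}$; $C=\{a: -\infty<L_1(a)<L_2(a)=+\infty\}$; $D=\{a: L_1(a)=-\infty,\ L_2(a)=+\infty\}$; $E=\{a: L_1(a)=L_2(a)=-\infty\}$; $F=\{a: L_1(a)=L_2(a)=+\infty\}$; $G=\{a: -\infty<L_1(a)=L_2(a)<+\infty\}$ (i.e. the convergent sequences). These seven sets partition $Seq(\mathbb{R})$. *)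

From Stdlib Require Import Reals.
From Coquelicot Require Import Coquelicot.
Open Scope R_scope.

Definition Seq := nat -> R.

Definition L1 (a : Seq) : Rbar := LimInf_seq a.
Definition L2 (a : Seq) : Rbar := LimSup_seq a.

Inductive Block : Set := bA | bB | bC | bD | bE | bF | bG.

Definition in_block (b : Block) (a : Seq) : Prop :=
  match b with
  | bA => L1 a = m_infty /\ is_finite (L2 a)
  | bB => is_finite (L1 a) /\ is_finite (L2 a) /\ Rbar_lt (L1 a) (L2 a)
  | bC => is_finite (L1 a) /\ L2 a = p_infty
  | bD => L1 a = m_infty /\ L2 a = p_infty
  | bE => L1 a = m_infty /\ L2 a = m_infty
  | bF => L1 a = p_infty /\ L2 a = p_infty
  | bG => is_finite (L1 a) /\ is_finite (L2 a) /\ L1 a = L2 a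
  end.

Definition union_of (S : Block -> Prop) (a : Seq) : Prop :=
  exists b, S b /\ in_block b a.

Definition is_subspace (M : Seq -> Prop) : Prop :=
  M (fun _ => 0) /\
  (forall a b, M a -> M b -> M (fun n => a n + b n)) /\
  (forall (c : R) a, M a -> M (fun n => c * a n)).

Definition set_eq (M N : Seq -> Prop) : Prop := forall a, M a <-> N a.

(* The space G of convergent sequences and the space B ∪ G of (eventually) bounded
   sequences are subspaces, and 0 lies in G, so it remains to see that a subspace
   meeting any of A, C, D, E, F is everything.  Every sequence x is the difference
   (x + w) - w where w_n = s_n (|x_n| + n) with signs s_n = ±1: both terms then have
   sign s_n and size at least n, so for s constant -1, constant 1, or alternating,
   both lie in E, F, or D respectively.  A reaches D, since two sequences of A
   vanishing on complementary parities have a difference in D, and C reaches A by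
   negation. *)

From Stdlib Require Import Reals Lia Lra Classical FunctionalExtensionality.
From Coquelicot Require Import Coquelicot.
From Corelib Require Import ssreflect.
Open Scope R_scope.

Lemma is_LimInf_seq_L1 a : is_LimInf_seq a (L1 a).
Proof. exact: (proj2_sig (ex_LimInf_seq a)). Qed.

Lemma is_LimSup_seq_L2 a : is_LimSup_seq a (L2 a).
Proof. exact: (proj2_sig (ex_LimSup_seq a)). Qed.

Lemma L1_eq_p_infty a :
  L1 a = p_infty <-> (forall M, exists N, forall n, (N <= n)%nat -> M < a n).
Proof.
split=> [E | H]; last exact: is_LimInf_seq_unique.
by have := is_LimInf_seq_L1 a; rewrite E.
Qed.

Lemma L1_eq_m_infty a :
  L1 a = m_infty <-> (forall M N, exists n, (N <= n)%nat /\ a n < M).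
Proof.
split=> [E | H]; last exact: is_LimInf_seq_unique.
by have := is_LimInf_seq_L1 a; rewrite E.
Qed.

Lemma L2_eq_p_infty a :
  L2 a = p_infty <-> (forall M N, exists n, (N <= n)%nat /\ M < a n).
Proof.
split=> [E | H]; last exact: is_LimSup_seq_unique.
by have := is_LimSup_seq_L2 a; rewrite E.
Qed.

Lemma L2_eq_m_infty a :
  L2 a = m_infty <-> (forall M, exists N, forall n, (N <= n)%nat -> a n < M).
Proof.
split=> [E | H]; last exact: is_LimSup_seq_unique.
by have := is_LimSup_seq_L2 a; rewrite E.
Qed.

Lemma L1_le_L2 a : Rbar_le (L1 a) (L2 a).
Proof. exact: LimSup_LimInf_seq_le. Qed.

Lemma in_block_unique b b' a : in_block b a -> in_block b' a -> b = b'.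
Proof.
have := L1_le_L2 a.
destruct b, b'; rewrite /=; auto; case: (L1 a) => [x||]; case: (L2 a) => [y||];
  rewrite /is_finite /=; intuition (try discriminate; try lra).
all: match goal with H : Finite _ = Finite _ |- _ => injection H as H; lra end.
Qed.

Lemma in_block_A_opp a : in_block bA a -> in_block bC (fun n => -1 * a n).
Proof.
rewrite /in_block.
have opp_eq : (fun n => -1 * a n) = (fun n => - a n).
  by apply: functional_extensionality => n; ring.
have -> : L1 (fun n => -1 * a n) = Rbar_opp (L2 a).
  apply: is_LimInf_seq_unique; rewrite opp_eq.
  exact/is_LimInf_opp_LimSup_seq/is_LimSup_seq_L2.
have -> : L2 (fun n => -1 * a n) = Rbar_opp (L1 a).
  apply: is_LimSup_seq_unique; rewrite opp_eq.
  exact/is_LimSup_opp_LimInf_seq/is_LimInf_seq_L1.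
by case: (L1 a); case: (L2 a); rewrite /is_finite /=; intuition discriminate.
Qed.

Lemma in_block_G_iff_convergent a : in_block bG a <-> exists l : R, is_lim_seq a l.
Proof.
split=> [[_ [F2 E]] | [l Hl]].
- exists (real (L2 a)); rewrite F2.
  apply: is_LimSup_LimInf_lim_seq; first exact: is_LimSup_seq_L2.
  by rewrite -E; exact: is_LimInf_seq_L1.
- rewrite /= /L1 /L2 (is_LimSup_seq_unique _ _ (is_lim_LimSup_seq _ _ Hl)).
  by rewrite (is_LimInf_seq_unique _ _ (is_lim_LimInf_seq _ _ Hl)).
Qed.

Definition eventually_bounded (a : Seq) : Prop :=
  exists M N, forall n, (N <= n)%nat -> Rabs (a n) <= M.

Lemma eventually_bounded_of_finite a :
  is_finite (L1 a) -> is_finite (L2 a) -> eventually_bounded a.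
Proof.
move=> F1 F2.
have C1 := is_LimInf_seq_L1 a; have C2 := is_LimSup_seq_L2 a.
rewrite -F1 in C1; rewrite -F2 in C2.
case: (C1 (mkposreal 1 Rlt_0_1)) => _ [N1 H1].
case: (C2 (mkposreal 1 Rlt_0_1)) => _ [N2 H2].
exists (Rabs (real (L1 a)) + Rabs (real (L2 a)) + 1), (N1 + N2)%nat => n Hn.
have /= := H1 n ltac:(lia); have /= := H2 n ltac:(lia).
have := proj1 (Rabs_le_between (real (L1 a)) _) (Rle_refl _).
have := proj1 (Rabs_le_between (real (L2 a)) _) (Rle_refl _).
move=> ? ? ? ?; apply/Rabs_le_between; lra.
Qed.

Lemma finite_of_eventually_bounded a :
  eventually_bounded a -> is_finite (L1 a) /\ is_finite (L2 a).
Proof.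
case=> M [N H].
have bnd n : (N <= n)%nat -> - M <= a n <= M by move=> Hn; apply/Rabs_le_between/H.
split.
- case E: (L1 a) => [x | | ]; rewrite /is_finite //; exfalso.
  + case: (proj1 (L1_eq_p_infty a) E M) => N' HN.
    have := HN (N + N')%nat ltac:(lia); have := bnd (N + N')%nat ltac:(lia); lra.
  + case: (proj1 (L1_eq_m_infty a) E (- M) N) => n [Hn Hlt].
    have := bnd n Hn; lra.
- case E: (L2 a) => [x | | ]; rewrite /is_finite //; exfalso.
  + case: (proj1 (L2_eq_p_infty a) E M N) => n [Hn Hlt].
    have := bnd n Hn; lra.
  + case: (proj1 (L2_eq_m_infty a) E (- M)) => N' HN.
    have := HN (N + N')%nat ltac:(lia); have := bnd (N + N')%nat ltac:(lia); lra.
Qed.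

Lemma in_block_BG_iff_eventually_bounded a :
  in_block bB a \/ in_block bG a <-> eventually_bounded a.
Proof.
split=> [H | /finite_of_eventually_bounded [F1 F2]].
- by apply: eventually_bounded_of_finite; case: H => /= [[? [? _]] | [? [? _]]].
- have := L1_le_L2 a; rewrite /=.
  move: F1 F2; case: (L1 a) => [x||]; case: (L2 a) => [y||]; rewrite /is_finite //=.
  by move=> _ _ [Hlt | ->]; [left | right].
Qed.

Definition dominated (s : nat -> R) (y : Seq) : Prop := forall n, INR n <= s n * y n.

Definition alternating (n : nat) : R := if Nat.even n then 1 else -1.

Lemma exists_large_of_parity (p : bool) (N : nat) (M : R) :
  exists n, (N <= n)%nat /\ Nat.even n = p /\ M < INR n.
Proof.
case: (INR_unbounded M) => k Hk.
have large m : (k <= m)%nat -> M < INR m by move=> Hm; have := le_INR _ _ Hm; lra.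
case: p; [exists (2 * (N + k))%nat | exists (S (2 * (N + k)))]; split; try lia.
- by rewrite Nat.even_mul; split; [| apply: large; lia].
- by rewrite Nat.even_succ Nat.odd_mul; split; [| apply: large; lia].
Qed.

Lemma in_block_E_of_dominated y : dominated (fun _ => -1) y -> in_block bE y.
Proof.
move=> Hy.
have L2E : L2 y = m_infty.
  apply/L2_eq_m_infty => M; case: (INR_unbounded (- M)) => N HN.
  exists N => n Hn; have := le_INR _ _ Hn; have := Hy n; lra.
by split=> //; have := L1_le_L2 y; rewrite L2E; case: (L1 y).
Qed.

Lemma in_block_F_of_dominated y : dominated (fun _ => 1) y -> in_block bF y.
Proof.
move=> Hy.
have L1F : L1 y = p_infty.
  apply/L1_eq_p_infty => M; case: (INR_unbounded M) => N HN.
  exists N => n Hn; have := le_INR _ _ Hn; have := Hy n; lra.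
by split=> //; have := L1_le_L2 y; rewrite L1F; case: (L2 y).
Qed.

Lemma in_block_D_of_dominated y : dominated alternating y -> in_block bD y.
Proof.
move=> Hy; split.
- apply/L1_eq_m_infty => M N.
  case: (exists_large_of_parity false N (- M)) => n [Hn [Hodd HM]].
  by exists n; split=> //; have := Hy n; rewrite /alternating Hodd; lra.
- apply/L2_eq_p_infty => M N.
  case: (exists_large_of_parity true N M) => n [Hn [Hev HM]].
  by exists n; split=> //; have := Hy n; rewrite /alternating Hev; lra.
Qed.

Definition neg_on_parity (p : bool) (n : nat) : R :=
  if Bool.eqb (Nat.even n) p then - INR n else 0.

Lemma in_block_A_neg_on_parity p : in_block bA (neg_on_parity p).
Proof.
split.
- apply/L1_eq_m_infty => M N.
  case: (exists_large_of_parity p N (- M)) => n [Hn [Hp HM]].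
  by exists n; split=> //; rewrite /neg_on_parity Hp Bool.eqb_reflx; lra.
- case E: (L2 (neg_on_parity p)) => [x | | ]; rewrite /is_finite //; exfalso.
  + case: (proj1 (L2_eq_p_infty _) E 0 0%nat) => n [_].
    rewrite /neg_on_parity; case: Bool.eqb; have := pos_INR n; lra.
  + case: (proj1 (L2_eq_m_infty _) E (-1)) => N HN.
    case: (exists_large_of_parity (negb p) N 0) => n [Hn [Hp _]].
    have := HN n Hn; rewrite /neg_on_parity Hp.
    have -> : Bool.eqb (negb p) p = false by case: p {E HN Hp}.
    lra.
Qed.

Lemma neg_on_parity_diff_dominated :
  dominated alternating (fun n => neg_on_parity false n + -1 * neg_on_parity true n).
Proof.
by move=> n; rewrite /alternating /neg_on_parity; case: (Nat.even n) => /=; lra.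
Qed.

Lemma is_subspace_ext M N : set_eq M N -> is_subspace N -> is_subspace M.
Proof.
move=> E [H0 [HD HZ]]; split; [| split].
- exact/E.
- by move=> a b /E Ha /E Hb; apply/E/HD.
- by move=> c a /E Ha; apply/E/HZ.
Qed.

Lemma is_subspace_G : is_subspace (in_block bG).
Proof.
split; [| split].
- by apply/in_block_G_iff_convergent; exists 0; apply: is_lim_seq_const.
- move=> a b /in_block_G_iff_convergent [la Ha] /in_block_G_iff_convergent [lb Hb].
  by apply/in_block_G_iff_convergent; exists (la + lb); apply: is_lim_seq_plus'.
- move=> c a /in_block_G_iff_convergent [la Ha].
  by apply/in_block_G_iff_convergent; exists (c * la); exact: (is_lim_seq_scal_l _ c _ Ha).
Qed.

Lemma is_subspace_BG : is_subspace (fun a => in_block bB a \/ in_block bG a).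
Proof.
split; [| split].
- apply/in_block_BG_iff_eventually_bounded; exists 0, 0%nat => n _.
  by rewrite Rabs_R0; lra.
- move=> a b /in_block_BG_iff_eventually_bounded [Ma [Na Ha]].
  move=> /in_block_BG_iff_eventually_bounded [Mb [Nb Hb]].
  apply/in_block_BG_iff_eventually_bounded; exists (Ma + Mb), (Na + Nb)%nat => n Hn.
  have := Rabs_triang (a n) (b n); have := Ha n ltac:(lia); have := Hb n ltac:(lia); lra.
- move=> c a /in_block_BG_iff_eventually_bounded [M [N H]].
  apply/in_block_BG_iff_eventually_bounded; exists (Rabs c * M), N => n Hn.
  by rewrite Rabs_mult; apply: Rmult_le_compat_l; [apply: Rabs_pos | apply: H].
Qed.

Lemma is_subspace_full_of_dominated (M : Seq -> Prop) (s : nat -> R) :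
  is_subspace M -> (forall n, s n = 1 \/ s n = -1) ->
  (forall y, dominated s y -> M y) -> forall x, M x.
Proof.
move=> [_ [HD HZ]] Hs Hdom x.
pose w n := s n * (Rabs (x n) + INR n).
have -> : x = (fun n => (x n + w n) + -1 * w n).
  by apply: functional_extensionality => n; ring.
apply: HD; last apply: HZ; apply: Hdom => n; rewrite /w;
  have := proj1 (Rabs_le_between (x n) _) (Rle_refl _); have := pos_INR n;
  case: (Hs n) => ->; lra.
Qed.

Section UnionSubspace.

Variable S : Block -> Prop.
Hypothesis HS : is_subspace (union_of S).

Lemma block_of_union b a : in_block b a -> union_of S a -> S b.
Proof. by move=> Ha [b' [Sb' Hb']]; rewrite (in_block_unique _ _ _ Ha Hb'). Qed.

Lemma union_G : S bG.
Proof.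
apply: (block_of_union _ (fun _ => 0)); last exact: (proj1 HS).
by apply/in_block_G_iff_convergent; exists 0; apply: is_lim_seq_const.
Qed.

Lemma union_full_of_E : S bE -> forall x, union_of S x.
Proof.
move=> SE; apply: (is_subspace_full_of_dominated _ (fun _ => -1) HS); first by right.
by move=> y Hy; exists bE; split=> //; apply: in_block_E_of_dominated.
Qed.

Lemma union_full_of_F : S bF -> forall x, union_of S x.
Proof.
move=> SF; apply: (is_subspace_full_of_dominated _ (fun _ => 1) HS); first by left.
by move=> y Hy; exists bF; split=> //; apply: in_block_F_of_dominated.
Qed.

Lemma union_full_of_D : S bD -> forall x, union_of S x.
Proof.
move=> SD; apply: (is_subspace_full_of_dominated _ alternating HS).
  by move=> n; rewrite /alternating; case: Nat.even; [left | right].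
by move=> y Hy; exists bD; split=> //; apply: in_block_D_of_dominated.
Qed.

Lemma union_D_of_A : S bA -> S bD.
Proof.
move=> SA; have [_ [HD HZ]] := HS.
have inA p : union_of S (neg_on_parity p).
  by exists bA; split; last exact: in_block_A_neg_on_parity.
apply: (block_of_union _ _ (in_block_D_of_dominated _ neg_on_parity_diff_dominated)).
exact/HD/HZ.
Qed.

Lemma union_A_of_C : S bC -> S bA.
Proof.
move=> SC; have [_ [_ HZ]] := HS.
have inC := in_block_A_opp _ (in_block_A_neg_on_parity true).
apply: (block_of_union _ _ (in_block_A_neg_on_parity true)).
have -> : neg_on_parity true = (fun n => -1 * (-1 * neg_on_parity true n)).
  by apply: functional_extensionality => n; ring.
by apply: HZ; exists bC.
Qed.

End UnionSubspace.

Theorem theorem3p5 (S : Block -> Prop) :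
  is_subspace (union_of S) <->
  (set_eq (union_of S) (in_block bG)
   \/ set_eq (union_of S) (fun a => in_block bB a \/ in_block bG a)
   \/ set_eq (union_of S) (fun _ => True)).
Proof.
split=> [HS | [E | [E | E]]]; last 3 first.
- exact: is_subspace_ext E is_subspace_G.
- exact: is_subspace_ext E is_subspace_BG.
- by apply: is_subspace_ext E _; split.
have SG := union_G S HS.
case: (classic (S bA \/ S bC \/ S bD \/ S bE \/ S bF)) => [Hbig | Hsmall].
- have SD : S bD \/ S bE \/ S bF.
    case: Hbig => [/(union_D_of_A _ HS) | [/(union_A_of_C _ HS)/(union_D_of_A _ HS) | ]];
    tauto.
  right; right => a; split=> // _.
  case: SD => [SD | [SE | SF]];
    [exact: union_full_of_D | exact: union_full_of_E | exact: union_full_of_F].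
- case: (classic (S bB)) => SB; [right; left | left] => a; split.
  + by case=> -[] [Sb Hb]; tauto.
  + by case=> Ha; eexists; eauto.
  + by case=> -[] [Sb Hb]; tauto.
  + by exists bG.
Qed.
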